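(* For every $\varepsilon>0$ there exists $x_2=x_2(\varepsilon)$ such that for all $x\ge x_2$, $$\mathcal{J}(x) > \exp\left\{ (2-\varepsilon)\frac{\sqrt{\log x}}{\log\log x} \right\}.$$
   Context: A positive integer $n$ is a Jordan-Pólya number if it can be written as a product of factorials, i.e. $n=a_1!a_2!\cdots a_r!$ for some integer $r\ge 1$ and positive integers $a_1,\dots,a_r$ (so $1=1!$ is one). Let $\mathcal{J}$ be the set of Jordan-Pólya numbers and $\mathcal{J}(x)=\#\{n\le x: n\in\mathcal{J}\}$ its counting function. $\log$ denotes the natural logarithm. *)

From Stdlib Require Import Reals Arith List ClassicalEpsilon.
Open Scope R_scope.

Definition isJP (n : nat) : Prop :=
  exists l : list nat, l <> nil /\ Forall (fun a => (1 <= a)%nat) l /\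
    n = fold_right (fun a acc => (fact a * acc)%nat) 1%nat l.

Definition JPcount_nat (N : nat) : nat :=
  fold_right (fun n acc =>
     ((if excluded_middle_informative (isJP n) then 1 else 0) + acc)%nat)
   0%nat (seq 1 N).

Definition JPcount (x : R) : nat :=
  JPcount_nat (Z.to_nat (Int_part x)).

From Stdlib Require Import Reals.
From Stdlib Require Import Lra Lia Psatz ZArith ClassicalEpsilon.
Set Warnings "-notation-overridden".
From mathcomp Require Import all_boot zify.
Open Scope R_scope.

(* Put s = sqrt(log x) and t = log s, so that log log x = 2t; we show
   J(x) > exp(s / t), which is more than required.  The construction:
   - Central binomial coefficients.  4^n <= (2n+1) C(2n,n), and every prime
     power dividing C(2n,n) is at most 2n, hence C(2n,n) <= (2n)^m where m is
     the number of distinct primes dividing C(2n,n) (all of them <= 2n).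
   - Products of factorials.  For distinct primes p_1 > ... > p_N, the
     products p_1!^e_1 ... p_N!^e_N with e_1 + ... + e_N <= N are pairwise
     distinct Jordan-Polya numbers (the largest prime factor of p! is p), and
     there are C(2N,N) of them.  Taking the p_i among the prime divisors of
     C(2n,n) (possible when N <= m), all of them are at most (2n)!^N.
   - Choice of parameters.  With n ~ (16/25) s and N ~ s^2 / (2n log 2n) one
     has (2n)!^N <= (2n)^(2nN) <= x, N <= m, and
     log C(2N,N) >= N log 4 - log(2N+1) > s / t once x >= exp(exp 8000). *)

Lemma ln_le_mono x y : 0 < x -> x <= y -> ln x <= ln y.
Proof.
move=> x0 /Rle_lt_or_eq_dec [xy|->]; last exact: Rle_refl.
by apply: Rlt_le; apply: ln_increasing.
Qed.

Lemma exp_le_mono x y : x <= y -> exp x <= exp y.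
Proof.
move=> /Rle_lt_or_eq_dec [xy|->]; last exact: Rle_refl.
by apply: Rlt_le; apply: exp_increasing.
Qed.

Lemma ln_le_sub1 y : 0 < y -> ln y <= y - 1.
Proof. by move=> y0; have := exp_ineq1_le (ln y); rewrite exp_ln //; lra. Qed.

Lemma exp_nat_mul n a : exp (INR n * a) = exp a ^ n.
Proof.
elim: n => [|n IH]; first by rewrite /= Rmult_0_l exp_0.
by rewrite S_INR Rmult_plus_distr_r Rmult_1_l exp_plus IH /=; ring.
Qed.

(* A numerical lower bound for ln 2, via exp(1/24) <= 24/23 and (24/23)^16 <= 2. *)
Lemma ln2_lb : 2/3 <= ln 2.
Proof.
have e24 : exp (1/24) <= 24/23.
  have := exp_ineq1_le (-(1/24)); have := exp_pos (1/24).
  have : exp (1/24) * exp (-(1/24)) = 1.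
    by rewrite -exp_plus (_ : 1/24 + -(1/24) = 0) ?exp_0 //; ring.
  nra.
have e23 : exp (2/3) <= 2.
  rewrite (_ : 2/3 = INR 16 * (1/24)); last by rewrite /=; field.
  rewrite exp_nat_mul; apply: Rle_trans (_ : (24/23)^16 <= 2); last by rewrite /=; lra.
  by apply: pow_incr; have := exp_pos (1/24); lra.
by rewrite -(ln_exp (2/3)); apply: ln_le_mono => //; apply: exp_pos.
Qed.

Lemma ln4_lb : 4/3 <= ln 4.
Proof.
rewrite (_ : 4 = 2 * 2); last by ring.
by rewrite ln_mult; try lra; have := ln2_lb; lra.
Qed.

Lemma ln_add1_le y : 1 <= y -> ln (y + 1) <= 1 + ln y.
Proof.
move=> y1; have : ln (y + 1) <= ln (2 * y) by apply: ln_le_mono; lra.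
by rewrite ln_mult; try lra; have := ln_le_sub1 2 ltac:(lra); lra.
Qed.

Lemma ln_double_add1_le y s : 0 <= y -> y <= s * s -> 1 <= s ->
  ln (2 * y + 1) <= 2 + 2 * ln s.
Proof.
move=> y0 ys s1; have : ln (2 * y + 1) <= ln (3 * (s * s)).
  by apply: ln_le_mono; nra.
by rewrite !ln_mult; try nra; have := ln_le_sub1 3 ltac:(lra); lra.
Qed.

(* exp grows faster than a cube: this is how s dominates powers of t = ln s. *)
Lemma exp_cube_lb t : 0 <= t -> (t/3)^3 <= exp t.
Proof.
move=> t0; rewrite {2}(_ : t = INR 3 * (t/3)); last by rewrite /=; field.
rewrite exp_nat_mul; apply: pow_incr; have := exp_ineq1_le (t/3); lra.
Qed.

Lemma floor_nat y : 0 <= y -> exists k : nat, INR k <= y < INR k + 1.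
Proof.
move=> y0; have [h1 h2] := archimed y.
have hz : (0 <= up y - 1)%Z.
  have : IZR 0 < IZR (up y) by rewrite /=; lra.
  by move/lt_IZR; lia.
exists (Z.to_nat (up y - 1)).
by rewrite INR_IZR_INZ Z2Nat.id // minus_IZR /=; lra.
Qed.

Lemma le_floor (k : nat) x : INR k <= x -> (k <= Z.to_nat (Int_part x))%coq_nat.
Proof.
move=> kx; have [h1 h2] := base_Int_part x.
have : IZR (Z.of_nat k) < IZR (Int_part x + 1) by rewrite plus_IZR -INR_IZR_INZ; lra.
by move/lt_IZR; lia.
Qed.

Open Scope nat_scope.

(* 4^n <= (2n+1) C(2n,n), by induction using C(2n+2,n+1) = 2(2n+1)/(n+1) C(2n,n). *)
Lemma central_binomial_lb n : 4 ^ n <= n.*2.+1 * 'C(n.*2, n).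
Proof.
elim: n => [|n IH] //.
have E1 := mul_bin_diag n.*2.+2 n.
have E2 := mul_bin_diag n.*2.+1 n.
have Esym : 'C(n.*2.+1, n.+1) = 'C(n.*2.+1, n).
  rewrite -(bin_sub (n:=n.*2.+1) (m:=n)); last by lia.
  congr binomial; lia.
simpl in E1, E2.
have Erec : n.+1 * 'C(n.*2.+2, n.+1) = 2 * (n.*2.+1 * 'C(n.*2, n)).
  by rewrite -E1 E2 Esym; lia.
rewrite doubleS expnS -(leq_pmul2l (ltn0Sn n)).
rewrite [X in _ <= X]mulnCA Erec mulnA [X in _ <= X]mulnA.
by apply: leq_mul => //; lia.
Qed.

Lemma logn_fact_sum p m K : prime p -> m <= K ->
  logn p m`! = \sum_(1 <= k < K.+1) m %/ p ^ k.
Proof.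
move=> pp mK; rewrite logn_fact //.
rewrite [RHS](big_cat_nat _ (n:=m.+1)) //=.
rewrite [X in _ + X]big1_seq ?addn0 // => k /andP[_].
rewrite mem_iota => /andP[hk _]; apply: divn_small.
have := ltn_expl k (prime_gt1 pp); lia.
Qed.

Lemma sum_indicator M T : \sum_(1 <= k < M.+1) (k <= T) = minn M T.
Proof.
elim: M => [|M IH]; first by rewrite big_geq // min0n.
by rewrite big_nat_recr //= IH; case: leqP => h; lia.
Qed.

(* Every prime power dividing C(2n,n) is at most 2n: in Legendre's formula each
   term floor(2n/p^k) - 2 floor(n/p^k) is 0 or 1, and 0 once p^k > 2n. *)
Lemma pfactor_central_binomial_le p n : prime p -> 0 < n ->
  p ^ logn p 'C(n.*2, n) <= n.*2.
Proof.
move=> pp n0; have p1 := prime_gt1 pp.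
set T := trunc_log p n.*2.
have pT : p ^ T <= n.*2 by apply: trunc_logP => //; lia.
have pT1 : n.*2 < p ^ T.+1 by apply: trunc_log_ltn.
suff : logn p 'C(n.*2, n) <= T.
  by move=> h; apply: leq_trans pT; rewrite leq_pexp2l // ltnW.
have Efact : 'C(n.*2, n) * (n`! * n`!) = (n.*2)`!.
  have h := @bin_fact n.*2 n; rewrite -addnn addnK in h.
  by rewrite -addnn; apply: h; exact: leq_addr.
have C0 : 0 < 'C(n.*2, n) by rewrite bin_gt0; lia.
have Elog : logn p (n.*2)`! = logn p 'C(n.*2, n) + (logn p n`! + logn p n`!).
  by rewrite -Efact (lognM _ C0) ?muln_gt0 ?fact_gt0 // lognM ?fact_gt0.
rewrite (logn_fact_sum p (n.*2) (n.*2)) // in Elog.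
rewrite (logn_fact_sum p n (n.*2)) // in Elog; last by lia.
have Hterm : \sum_(1 <= k < n.*2.+1) n.*2 %/ p ^ k <=
             \sum_(1 <= k < n.*2.+1) (n %/ p ^ k + n %/ p ^ k + (k <= T)).
  apply: leq_sum => k _; case: (leqP k T) => hk.
    have q0 : 0 < p ^ k by rewrite expn_gt0; lia.
    move: (p ^ k) q0 => q q0.
    have := divn_eq n q; have := ltn_pmod n q0.
    have := divn_eq n.*2 q; have := ltn_pmod n.*2 q0; nia.
  rewrite divn_small //=; apply: (leq_trans pT1); rewrite leq_pexp2l //; lia.
rewrite !big_split /= sum_indicator in Hterm; lia.
Qed.

Lemma prod_const_seq (s : seq nat) c : \prod_(i <- s) c = c ^ size s.
Proof. by elim: s => [|a s IH]; rewrite ?big_nil // big_cons IH expnS. Qed.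

Lemma central_binomial_le_pow_nprimes n : 0 < n ->
  'C(n.*2, n) <= n.*2 ^ size (primes 'C(n.*2, n)).
Proof.
move=> n0; have C0 : 0 < 'C(n.*2, n) by rewrite bin_gt0; lia.
rewrite {1}(prod_prime_decomp C0) prime_decompE big_map /= -prod_const_seq.
rewrite big_seq [X in _ <= X]big_seq; apply: leq_prod => p.
by rewrite mem_primes => /and3P[pp _ _]; exact: pfactor_central_binomial_le.
Qed.

Lemma primes_central_binomial_le n p : 0 < n ->
  p \in primes 'C(n.*2, n) -> p <= n.*2.
Proof.
move=> n0 hp; have pp : prime p by move: hp; rewrite mem_primes => /and3P[].
apply: leq_trans (pfactor_central_binomial_le p n pp n0).
by rewrite -{1}(expn1 p) leq_pexp2l ?logn_gt0 // prime_gt0.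
Qed.

(* fact_products ps N lists the products prod_(p in ps) p!^(e_p) with
   sum_p e_p <= N, following Pascal's rule: for ps = q :: r, either q! does not
   occur (products over r within budget N), or it occurs at least once
   (q! times a product over q :: r within budget N - 1). *)
Fixpoint fact_products (ps : seq nat) : nat -> seq nat :=
  match ps with
  | [::] => fun _ => [:: 1]
  | q :: r => let g := fact_products r in
      fix h N := match N with
                 | 0 => g 0
                 | N'.+1 => g N'.+1 ++ map (muln q`!) (h N')
                 end
  end.

Lemma size_fact_products ps N :
  size (fact_products ps N) = 'C(N + size ps, size ps).
Proof.
elim: ps N => [|q r IH] N /=; first by rewrite bin0.
elim: N => [|N IHN] /=; first by rewrite IH !add0n !binn.
rewrite size_cat size_map IHN IH.
rewrite (_ : N.+1 + (size r).+1 = (N.+1 + size r).+1); last by lia.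
by rewrite binS addnC; congr (_ + _); congr binomial; lia.
Qed.

Lemma fact_products_ind (P : nat -> Prop) ps N v :
  P 1 -> (forall q w, q \in ps -> P w -> P (q`! * w)) ->
  v \in fact_products ps N -> P v.
Proof.
move=> P1 PM; elim: ps N v PM => [|q r IH] N v PM /=.
  by rewrite inE => /eqP ->.
have PMr : forall p w, p \in r -> P w -> P (p`! * w).
  by move=> p w hp; apply: PM; rewrite inE hp orbT.
elim: N v => [|N IHN] v /=; first exact: IH.
rewrite mem_cat => /orP[]; first exact: IH.
by case/mapP => w /IHN hw ->; apply: PM => //; rewrite inE eqxx.
Qed.

Lemma fact_products_gt0 ps N v : v \in fact_products ps N -> 0 < v.
Proof.
apply: (fact_products_ind (fun v => 0 < v)) => // q w _ w0.
by rewrite muln_gt0 fact_gt0.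
Qed.

Lemma fact_eq n : fact n = n`!.
Proof. by elim: n => [|n IH] //=; rewrite factS -IH. Qed.

(* Since 0! = 1, no positivity assumption on ps is needed. *)
Lemma fact_products_JP ps N v : v \in fact_products ps N -> isJP v.
Proof.
apply: (fact_products_ind isJP) => [|[|q] w _ JPw].
- by exists [:: 1]; split => //; split => //; constructor.
- by rewrite fact0 mul1n.
- have [l [l0 [l1 ->]]] := JPw.
  exists (q.+1 :: l); split => //; split; first by constructor => //; apply/leP.
  by rewrite /= fact_eq.
Qed.

Lemma fact_products_le ps N K v : all (fun p => p <= K) ps ->
  v \in fact_products ps N -> v <= K`! ^ N.
Proof.
elim: ps N v => [|q r IH] N v /=.
  by move=> _; rewrite inE => /eqP ->; rewrite expn_gt0 fact_gt0.
move=> /andP[qK rK].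
elim: N v => [|N IHN] v /=; first exact: IH.
rewrite mem_cat => /orP[]; first exact: IH.
by case/mapP => w /IHN wK ->; rewrite expnS leq_mul // leq_fact.
Qed.

Lemma logn_fact_small q p : prime q -> p < q -> logn q p`! = 0.
Proof.
move=> pq pq_lt; rewrite logn_fact //.
apply: big1_seq => k /andP[_]; rewrite mem_iota => /andP[k1 _].
apply: divn_small; apply: (leq_trans pq_lt).
by rewrite -{1}(expn1 q) leq_pexp2l // prime_gt0.
Qed.

Lemma logn_fact_self q : prime q -> 0 < logn q q`!.
Proof.
move=> pq; rewrite logn_gt0 mem_primes pq fact_gt0 /=.
by apply: dvdn_fact; rewrite prime_gt0 /=.
Qed.

Lemma logn_fact_products ps N v q : prime q -> all (fun p => p < q) ps ->
  v \in fact_products ps N -> logn q v = 0.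
Proof.
move=> pq /allP ps_lt hv.
suff [] : 0 < v /\ logn q v = 0 by [].
move: hv; apply: (fact_products_ind (fun v => 0 < v /\ logn q v = 0)).
  by rewrite logn1.
move=> p w /ps_lt pq_lt [w0 wq].
by rewrite muln_gt0 fact_gt0 lognM ?fact_gt0 ?logn_fact_small // wq.
Qed.

(* For primes listed in decreasing order the products are pairwise distinct:
   the q-adic valuation separates products using q! from the others. *)
Lemma fact_products_uniq ps N :
  sorted (fun a b => b < a) ps -> all prime ps -> uniq (fact_products ps N).
Proof.
elim: ps N => [|q r IH] N //= ps_sorted /andP[pq pr].
have r_sorted : sorted (fun a b => b < a) r := path_sorted ps_sorted.
have r_lt : all (fun p => p < q) r.
  apply: (order_path_min (leT := fun a b => b < a)) => // a b c h1 h2.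
  exact: ltn_trans h2 h1.
elim: N => [|N IHN] /=; first exact: IH.
have mul_inj : injective (muln q`!).
  by move=> a b h; apply/eqP; rewrite -(eqn_pmul2l (fact_gt0 q)) h.
rewrite cat_uniq IH // (map_inj_uniq mul_inj) IHN andbT.
apply/hasPn => _ /mapP[w hw ->]; apply/negP => hin.
have := logn_fact_products _ _ _ _ pq r_lt hin.
have w0 : 0 < w := fact_products_gt0 (q :: r) N w hw.
by rewrite lognM ?fact_gt0 //; have := logn_fact_self _ pq; lia.
Qed.


Definition isJPb (n : nat) : bool :=
  if excluded_middle_informative (isJP n) then true else false.

Lemma JPcount_nat_count X : JPcount_nat X = count isJPb (iota 1 X).
Proof.
rewrite /JPcount_nat.
have -> : List.seq 1 X = iota 1 X by move: 1; elim: X => [|X IH] a //=; rewrite IH.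
elim: (iota 1 X) => [|a s IH] //=.
by rewrite IH /isJPb; case: excluded_middle_informative.
Qed.

Lemma JPcount_nat_ge_uniq X l : uniq l ->
  (forall v, v \in l -> 0 < v <= X /\ isJP v) -> size l <= JPcount_nat X.
Proof.
move=> l_uniq hl; rewrite JPcount_nat_count -size_filter.
apply: uniq_leq_size => // v /hl [vX JPv].
by rewrite mem_filter mem_iota /isJPb; case: excluded_middle_informative.
Qed.

Lemma JPcount_nat_ge_central_binomial n N X : 0 < n ->
  N <= size (primes 'C(n.*2, n)) -> (n.*2)`! ^ N <= X ->
  'C(N.*2, N) <= JPcount_nat X.
Proof.
move=> n0 Nm hX.
set ps := take N (rev (primes 'C(n.*2, n))).
have ps_size : size ps = N by rewrite /ps size_takel // size_rev.
have ps_prime : all prime ps.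
  apply/allP => p /mem_take; rewrite mem_rev mem_primes; by case/andP.
have ps_le : all (fun p => p <= n.*2) ps.
  apply/allP => p /mem_take; rewrite mem_rev; exact: primes_central_binomial_le.
have ps_sorted : sorted (fun a b => b < a) ps.
  by apply: take_sorted; rewrite rev_sorted; exact: sorted_primes.
rewrite -addnn -ps_size -size_fact_products.
apply: JPcount_nat_ge_uniq; first exact: fact_products_uniq.
move=> v hv; split; last exact: fact_products_JP hv.
rewrite (fact_products_gt0 _ _ _ hv) /=; apply: leq_trans hX.
by rewrite -ps_size; exact: fact_products_le hv.
Qed.

Open Scope R_scope.

Lemma INR_expn a e : INR (a ^ e)%nat = INR a ^ e.
Proof. by elim: e => [|e IH] //=; rewrite expnS mult_INR IH. Qed.

Lemma INR_double a : INR a.*2 = 2 * INR a.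
Proof. by rewrite -addnn plus_INR; ring. Qed.

Lemma INR_4 : INR 4 = 4.
Proof. by rewrite /=; ring. Qed.

Lemma ln_central_binomial_lb n Y : INR 'C(n.*2, n) <= Y ->
  INR n * ln 4 <= ln (2 * INR n + 1) + ln Y.
Proof.
move=> hY.
have C1 : 1 <= INR 'C(n.*2, n).
  by rewrite -[1]/(INR 1); apply/le_INR/leP; rewrite bin_gt0 -addnn leq_addl.
have n0 := pos_INR n.
have h := le_INR _ _ (elimT leP (central_binomial_lb n)).
rewrite INR_expn mult_INR (S_INR n.*2) INR_double INR_4 in h.
rewrite -ln_pow -?ln_mult; try lra.
apply: ln_le_mono; first by apply: pow_lt; lra.
apply: (Rle_trans _ _ _ h); apply: Rmult_le_compat_l; lra.
Qed.

Lemma nprimes_central_binomial_lb n : (0 < n)%nat ->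
  INR n * ln 4 <=
  ln (2 * INR n + 1) + INR (size (primes 'C(n.*2, n))) * ln (2 * INR n).
Proof.
move=> n0; rewrite -[X in _ + X]ln_pow; last first.
  by rewrite -INR_double; apply: lt_0_INR; apply/ltP; lia.
apply: ln_central_binomial_lb; rewrite -INR_double -INR_expn.
by apply/le_INR/leP; exact: central_binomial_le_pow_nprimes.
Qed.

Lemma JPcount_nat_exp_lb n N X : (0 < n)%nat ->
  (N <= size (primes 'C(n.*2, n)))%nat -> ((n.*2)`! ^ N <= X)%nat ->
  exp (INR N * ln 4 - ln (2 * INR N + 1)) <= INR (JPcount_nat X).
Proof.
move=> n0 Nm hX.
have hJ := le_INR _ _ (elimT leP (JPcount_nat_ge_central_binomial n N X n0 Nm hX)).
have J0 : 0 < INR (JPcount_nat X).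
  apply: Rlt_le_trans hJ; apply: lt_0_INR; apply/ltP.
  by rewrite bin_gt0 -addnn leq_addl.
rewrite -(exp_ln _ J0); apply: exp_le_mono.
have := ln_central_binomial_lb N _ hJ; lra.
Qed.

Lemma fact_le_pow k : (k`! <= k ^ k)%nat.
Proof.
elim: k => [|k IH] //; rewrite factS expnS leq_mul2l /=.
apply: (leq_trans IH); case: k {IH} => [|k] //; by rewrite leq_exp2r.
Qed.

(* (2n)!^N <= (2n)^(2nN) <= x as soon as 2nN log(2n) <= log x. *)
Lemma fact_pow_le_floor n N x : (0 < n)%nat -> 0 < x ->
  2 * INR n * INR N * ln (2 * INR n) <= ln x ->
  ((n.*2)`! ^ N <= Z.to_nat (Int_part x))%nat.
Proof.
move=> n0 x0 hx; apply/leP/le_floor.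
have n2 : 0 < 2 * INR n by rewrite -INR_double; apply: lt_0_INR; apply/ltP; lia.
have h : ((n.*2)`! ^ N <= n.*2 ^ (n.*2 * N))%nat.
  by rewrite expnM; case: N {hx} => [|N] //; rewrite leq_exp2r // fact_le_pow.
apply: Rle_trans (le_INR _ _ (elimT leP h)) _.
rewrite INR_expn INR_double -(exp_ln (2 * INR n)) // -exp_nat_mul -(exp_ln x) //.
apply: exp_le_mono; rewrite mult_INR INR_double; lra.
Qed.

(* Arithmetic core of N <= m: with n ~ (16/25) s, lg = log(2n) and
   N lg <= s^2 / (2n), the bound n log 4 <= 1 + (m + 1) lg is incompatible
   with m + 1 <= N. *)
Lemma prime_budget_arith s nr Nr m lg l4 :
  100 <= s -> 16/25*s - 1 <= nr -> nr <= 16/25*s -> 1 <= nr -> 0 < lg ->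
  4/3 <= l4 -> nr*l4 <= 1 + (m+1)*lg -> m + 1 <= Nr -> Nr*(2*nr*lg) <= s*s ->
  False.
Proof.
move=> hs hn1 hn2 hn3 hlg hl4 hm hmN hK.
have h1 : Nr * lg >= (m + 1) * lg by nra.
have h2 : 2 * nr * nr * l4 <= 2 * nr + s * s by nra.
have h3 : 2 * nr * nr * (4/3) <= 2 * nr * nr * l4 by nra.
nra.
Qed.

(* Arithmetic core of N log 4 - log(2N+1) > s/t: here t = log s is large, s
   dominates (t/3)^3, and N is the integer part of s^2 / (2n log(2n)). *)
Lemma count_budget_arith t s nr Nr lg l4 LN :
  4000 <= t -> (t/3)^3 <= s -> 1 <= nr -> nr <= 16/25*s ->
  2/3 <= lg -> lg <= t + 28/100 -> 4/3 <= l4 -> 0 <= Nr ->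
  (Nr + 1) * (2*nr*lg) > s*s -> LN <= 2 + 2*t ->
  Nr*l4 - LN > s/t.
Proof.
move=> ht hs hn1 hn2 hl1 hl2 hl4 hN hK hLN.
have cube : (t/3)^3 = t * t * t / 27 by rewrite /=; field.
have s0 : 0 < s.
  have t3 : 0 < t * t * t by apply: Rmult_lt_0_compat; nra.
  lra.
have hD : 2 * nr * lg <= 128/100 * s * (t + 28/100) by nra.
have hNs : s < (Nr + 1) * (128/100) * (t + 28/100).
  have h : s * s < (Nr + 1) * (128/100 * s * (t + 28/100)).
    by apply: Rlt_le_trans hK _; apply: Rmult_le_compat_l; lra.
  nra.
have hNt : Nr + 1 >= t * t / 35.
  have h : t * t * t / 27 < (Nr + 1) * (128/100) * (1001/1000 * t).
    apply: (Rlt_le_trans _ ((Nr + 1) * (128/100) * (t + 28/100))); first lra.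
    by apply: Rmult_le_compat_l; nra.
  nra.
have hN36 : Nr >= t * t / 36 by nra.
have hN5 : Nr * (5333/100000 * t - 3584/10000) >= 2 * t * t + 328/100 * t + 3584/10000.
  have h1 : 5333/100000 * t - 3584/10000 >= 5/100 * t by lra.
  have h2 : Nr * (5333/100000 * t - 3584/10000) >= t * t / 36 * (5/100 * t) by nra.
  nra.
have h : t * (Nr * l4 - LN) > s.
  have h4 : t * (Nr * l4) >= t * (4/3 * Nr) by nra.
  nra.
apply: (Rmult_lt_reg_l t); first lra.
by rewrite (_ : t * (s / t) = s) //; field; lra.
Qed.

(* For s >= exp 4000 there are n, N with N <= m(n) (the number of primes of
   C(2n,n)), 2nN log(2n) <= s^2 and N log 4 - log(2N+1) > s / log s:
   take n = floor((16/25) s) and N = floor(s^2 / (2n log(2n))). *)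
Lemma choose_parameters s : exp 4000 <= s ->
  exists n N : nat, (0 < n)%nat /\
    (forall m : nat,
       INR n * ln 4 <= ln (2 * INR n + 1) + INR m * ln (2 * INR n) ->
       (N <= m)%nat) /\
    2 * INR n * INR N * ln (2 * INR n) <= s * s /\
    s / ln s < INR N * ln 4 - ln (2 * INR N + 1).
Proof.
move=> hs; have s0 : 0 < s by have := exp_pos 4000; lra.
set t := ln s.
have ht : 4000 <= t.
  by rewrite /t -(ln_exp 4000); apply: ln_le_mono => //; apply: exp_pos.
have hts : (t/3)^3 <= s by rewrite -(exp_ln s) //; apply: exp_cube_lb; lra.
have cube : (t/3)^3 = t * t * t / 27 by rewrite /=; field.
have hs100 : 100 <= s by nra.
have l4 := ln4_lb.
have [n [hn1 hn2]] := floor_nat (16/25 * s) ltac:(lra).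
set nr := INR n in hn1 hn2 *.
have n0 : (0 < n)%nat by apply/ltP; apply: INR_lt; rewrite /= -/nr; lra.
have nr1 : 1 <= nr by rewrite /nr -[1]/(INR 1); apply: le_INR; apply/leP.
set lg := ln (2 * nr).
have hlg1 : 2/3 <= lg by apply: Rle_trans ln2_lb _; apply: ln_le_mono; lra.
have hlg2 : lg <= t + 28/100.
  have h : lg <= ln (128/100 * s) by apply: ln_le_mono; lra.
  rewrite ln_mult -/t in h; try lra.
  have := ln_le_sub1 (128/100) ltac:(lra); lra.
have D0 : 0 < 2 * nr * lg by apply: Rmult_lt_0_compat; lra.
have [N [hN1 hN2]] := floor_nat (s * s / (2 * nr * lg))
  ltac:(apply: Rle_mult_inv_pos; nra).
set Nr := INR N in hN1 hN2 *.
have Nr0 : 0 <= Nr by apply: pos_INR.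
have Es : s * s = s * s / (2 * nr * lg) * (2 * nr * lg) by field; lra.
have hK1 : Nr * (2 * nr * lg) <= s * s by nra.
have hK2 : (Nr + 1) * (2 * nr * lg) > s * s by nra.
exists n, N; rewrite -/nr -/Nr -/lg; split => //; split; [|split; first lra].
- move=> m hm; rewrite leqNgt; apply/negP => /leP mN.
  have hm1 : INR m + 1 <= Nr by rewrite -[1]/(INR 1) -plus_INR; apply: le_INR; lia.
  have h2n : ln (2 * nr + 1) <= 1 + lg by apply: ln_add1_le; lra.
  by apply: (prime_budget_arith s nr Nr (INR m) lg (ln 4)); lra.
- have D1 : 1 <= 2 * nr * lg by nra.
  have Nrs : Nr <= s * s by move: hK1 D1; move: (2 * nr * lg) => D; nra.
  have hLN : ln (2 * Nr + 1) <= 2 + 2 * t by apply: ln_double_add1_le; lra.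
  by have := count_budget_arith t s nr Nr lg (ln 4) (ln (2 * Nr + 1)); lra.
Qed.

Lemma sqrt_ln_large x : exp (exp 8000) <= x ->
  [/\ 0 < x, sqrt (ln x) * sqrt (ln x) = ln x,
      ln (ln x) = 2 * ln (sqrt (ln x)) & exp 4000 <= sqrt (ln x)].
Proof.
move=> hx; have x0 : 0 < x by have := exp_pos (exp 8000); lra.
have lnx : exp 8000 <= ln x.
  by rewrite -(ln_exp (exp 8000)); apply: ln_le_mono => //; apply: exp_pos.
set s := sqrt (ln x).
have ss : s * s = ln x by apply: sqrt_sqrt; have := exp_pos 8000; lra.
have hs : exp 4000 <= s.
  have e8 : exp 8000 = exp 4000 * exp 4000 by rewrite -exp_plus; congr exp; ring.
  have s_nonneg : 0 <= s := sqrt_pos _.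
  by have := exp_pos 4000; nra.
have s0 : 0 < s by have := exp_pos 4000; lra.
by split => //; rewrite -{1}ss ln_mult //; ring.
Qed.

Lemma exponent_lt eps s : 0 < eps -> 1 < s ->
  (2 - eps) * (s / (2 * ln s)) < s / ln s.
Proof.
move=> eps0 s1.
have t0 : 0 < ln s by rewrite -ln_1; apply: ln_increasing; lra.
rewrite (_ : s / (2 * ln s) = (s / ln s) / 2); last by field; lra.
have : 0 < s / ln s by apply: Rdiv_lt_0_compat; lra.
nra.
Qed.

Theorem mainTheorem2 : forall eps : R, 0 < eps ->
  exists x2 : R, forall x : R, x2 <= x ->
    INR (JPcount x) > exp ((2 - eps) * (sqrt (ln x) / ln (ln x))).
Proof.
move=> eps heps; exists (exp (exp 8000)) => x hx.
have [x0 ss lnlnx hs] := sqrt_ln_large x hx.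
set s := sqrt (ln x) in ss lnlnx hs *.
have [n [N [n0 [hNm [hX hcount]]]]] := choose_parameters s hs.
have hJ := JPcount_nat_exp_lb n N (Z.to_nat (Int_part x)) n0
  (hNm _ (nprimes_central_binomial_lb n n0))
  (fact_pow_le_floor n N x n0 x0 ltac:(lra)).
have s1 : 1 < s by apply: Rlt_le_trans hs; rewrite -exp_0; apply: exp_increasing; lra.
apply: Rlt_le_trans hJ; apply: Rle_lt_trans (exp_increasing _ _ hcount).
by apply: exp_le_mono; rewrite lnlnx; apply/Rlt_le/exponent_lt.
Qed.
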